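(* Let $R$ be an almost Dedekind domain, let $G_\cap(R)=\{\nu_I\mid I\in\mathrm{Inv}(R)\}\cap\mathcal{C}_c(\mathcal{M},\mathbb{Z})$ and $G_r(R)=\mathcal{C}_c(\mathcal{M},\mathbb{Z})/G_\cap(R)$. Then there is a surjective group homomorphism $\mathcal{C}_c(\partial(\mathcal{M}),\mathbb{Z})\to G_r(R)$, where $\partial(\mathcal{M})$ is the set of non-isolated points of $\mathcal{M}$.
   Context: $R$ almost Dedekind: $R_M$ is a DVR with valuation $v_M$ for each maximal $M$. $\mathcal{M}$ is $\mathrm{Max}(R)$ with the inverse topology (restriction of the coarsest topology on $\mathrm{Spec}(R)$ in which Zariski-open Zariski-compact sets are closed); subsets carry the subspace topology. For nonzero fractional $I$, $\nu_I(M)=\inf\{v_M(i)\mid i\in I\setminus\{0\}\}$. $\mathrm{Inv}(R)$ is the group of invertible fractional ideals. $\mathcal{C}_c(X,\mathbb{Z})$: continuous compactly supported functions $X\to\mathbb{Z}$ ($\mathbb{Z}$ discrete), under pointwise addition. *)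

From HB Require Import structures.
From mathcomp Require Import all_boot all_order all_algebra fraction.
From mathcomp Require Import boolp classical_sets.
Set Implicit Arguments. Unset Strict Implicit. Unset Printing Implicit Defensive.
Import Order.TTheory GRing.Theory Num.Theory.
Local Open Scope classical_set_scope.
Local Open Scope ring_scope.

Section AlmostDedekind.
Variable R : idomainType.
Local Notation F := {fraction R}.

Definition inF (r : R) : F := tofrac r.

Definition ideal (I : set R) : Prop :=
  I 0 /\ (forall x y, I x -> I y -> I (x + y)) /\ (forall r x, I x -> I (r * x)).
Definition prime_ideal (P : set R) : Prop :=
  ideal P /\ ~ P 1 /\ (forall a b, P (a * b) -> P a \/ P b).
Definition maximal_ideal (M : set R) : Prop :=
  ideal M /\ ~ M 1 /\ (forall J, ideal J -> M `<=` J -> J = M \/ J 1).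

Definition MaxT : Type := {M : set R | maximal_ideal M}.

Definition zariski_open (U : set (set R)) : Prop :=
  exists S : set R, U = [set P | prime_ideal P /\ ~ (S `<=` P)].
Definition zariski_compact (U : set (set R)) : Prop :=
  forall Fam : set (set (set R)), (forall V, Fam V -> zariski_open V) ->
    U `<=` \bigcup_(V in Fam) V ->
    exists (n : nat) (G : 'I_n -> set (set R)),
      (forall i, Fam (G i)) /\ U `<=` \bigcup_(i in [set: 'I_n]) G i.
(* Open sets of the inverse topology on Spec(R): the topology generated
   (unions of finite intersections) by the complements in Spec(R) of the
   Zariski-open Zariski-compact sets. *)
Definition inverse_open (O : set (set R)) : Prop :=
  O `<=` prime_ideal /\
  forall P, O P -> exists (n : nat) (U : 'I_n -> set (set R)),
    (forall i, zariski_open (U i) /\ zariski_compact (U i)) /\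
    (forall i, ~ U i P) /\
    (forall Q, prime_ideal Q -> (forall i, ~ U i Q) -> O Q).

Definition Max_open (W : set MaxT) : Prop :=
  exists O, inverse_open O /\ forall M : MaxT, W M <-> O (proj1_sig M).
Definition Max_compact (A : set MaxT) : Prop :=
  forall Fam : set (set MaxT), (forall W, Fam W -> Max_open W) ->
    A `<=` \bigcup_(W in Fam) W ->
    exists (n : nat) (G : 'I_n -> set MaxT),
      (forall i, Fam (G i)) /\ A `<=` \bigcup_(i in [set: 'I_n]) G i.
(* C_c(𝓜, Z), Z discrete: all preimages open, support compact *)
Definition Cc_Max (f : MaxT -> int) : Prop :=
  (forall A : set int, Max_open (f @^-1` A)) /\ Max_compact [set M | f M != 0].

Definition isolated (M : MaxT) : Prop := Max_open [set M].
Definition BdT : Type := {M : MaxT | ~ isolated M}.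
Definition Bd_open (W : set BdT) : Prop :=
  exists O, Max_open O /\ forall x : BdT, W x <-> O (proj1_sig x).
Definition Bd_compact (A : set BdT) : Prop :=
  forall Fam : set (set BdT), (forall W, Fam W -> Bd_open W) ->
    A `<=` \bigcup_(W in Fam) W ->
    exists (n : nat) (G : 'I_n -> set BdT),
      (forall i, Fam (G i)) /\ A `<=` \bigcup_(i in [set: 'I_n]) G i.
Definition Cc_Bd (g : BdT -> int) : Prop :=
  (forall A : set int, Bd_open (g @^-1` A)) /\ Bd_compact [set x | g x != 0].

Definition localization (M : MaxT) : set F :=
  [set x | exists a s : R, ~ proj1_sig M s /\ x = inF a / inF s].
(* v is a surjective discrete valuation F^* -> Z (values at 0 irrelevant) *)
Definition discrete_valuation (w : F -> int) : Prop :=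
  (forall x y, x != 0 -> y != 0 -> w (x * y) = w x + w y) /\
  (forall x y, x != 0 -> y != 0 -> x + y != 0 -> Num.min (w x) (w y) <= w (x + y)) /\
  (forall n : int, exists x, x != 0 /\ w x = n).
(* R is almost Dedekind, and v M is the valuation v_M of the DVR R_M *)
Definition almost_dedekind_with (v : MaxT -> F -> int) : Prop :=
  forall M : MaxT, discrete_valuation (v M) /\
    localization M = [set x | x != 0 -> 0 <= v M x].

Definition Rsubmodule (I : set F) : Prop :=
  I 0 /\ (forall x y, I x -> I y -> I (x + y)) /\ (forall r x, I x -> I (inF r * x)).
Definition fractional_ideal (I : set F) : Prop :=
  Rsubmodule I /\ (exists x, I x /\ x != 0) /\
  exists d : R, d != 0 /\ forall x, I x -> exists r : R, inF d * x = inF r.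
Definition ideal_mul (I J : set F) : set F :=
  [set x | exists (n : nat) (a b : 'I_n -> F),
     (forall i, I (a i) /\ J (b i)) /\ x = \sum_(i < n) a i * b i].
Definition invertible_ideal (I : set F) : Prop :=
  fractional_ideal I /\
  exists J, fractional_ideal J /\ ideal_mul I J = [set x | exists r : R, x = inF r].

(* nu_I(M) = inf { v_M(i) | i in I \ 0 } ; "is_nu v I M n" says this inf is n *)
Definition is_nu (v : MaxT -> F -> int) (I : set F) (M : MaxT) (n : int) : Prop :=
  (forall i, I i -> i != 0 -> n <= v M i) /\
  (forall m : int, (forall i, I i -> i != 0 -> m <= v M i) -> m <= n).

Definition Gcap (v : MaxT -> F -> int) (f : MaxT -> int) : Prop :=
  (exists I, invertible_ideal I /\ forall M, is_nu v I M (f M)) /\ Cc_Max f.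

End AlmostDedekind.

(* Every M in Max(R) has a basis of compact open neighbourhoods V(t) ∩ D(y) that are
   also closed, t being a uniformizer of R_M: an inverse-open set around M avoids finitely
   many quasi-compact Zariski opens, each covered by finitely many D(s) with s in M, and
   writing s^k/t = a/y with k = v_M(t) and y outside M gives V(t) ∩ D(y) ⊆ V(s).
   Hence every g in C_c(∂𝓜, Z) is the restriction of a step function over finitely many
   such sets, and phi g is a chosen extension. The differences phi(g1 + g2) - phi g1 - phi g2
   and f - phi (f restricted to ∂𝓜) vanish on ∂𝓜, so their compact supports consist of
   isolated points and are finite. The indicator of an isolated M is nu_I for I = (t, n),
   where V(t) ∩ D(y) = {M} and n + r y = 1 with n in M; as nu_(IJ) = nu_I + nu_J and
   nu_(I^-1) = - nu_I, every function supported on finitely many isolated points is in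
   G_cap(R). *)

From HB Require Import structures.
From mathcomp Require Import all_boot all_order all_algebra fraction.
From mathcomp Require Import boolp classical_sets.
From mathcomp Require Import ring.
Import Order.TTheory GRing.Theory Num.Theory.
Set Implicit Arguments. Unset Strict Implicit. Unset Printing Implicit Defensive.
Local Open Scope classical_set_scope.
Local Open Scope ring_scope.

Definition fcat (T : Type) n1 n2 (G1 : 'I_n1 -> T) (G2 : 'I_n2 -> T) : 'I_(n1 + n2) -> T :=
  fun i => match split i with inl j => G1 j | inr k => G2 k end.

Lemma fcatP (T : Type) n1 n2 (G1 : 'I_n1 -> T) (G2 : 'I_n2 -> T) (P : T -> Prop) :
  (forall i, P (G1 i)) -> (forall i, P (G2 i)) -> forall i, P (fcat G1 G2 i).
Proof. by move=> P1 P2 i; rewrite /fcat; case: split. Qed.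

Lemma fcat_lshift (T : Type) n1 n2 (G1 : 'I_n1 -> T) (G2 : 'I_n2 -> T) j :
  fcat G1 G2 (lshift n2 j) = G1 j.
Proof. by rewrite /fcat (unsplitK (inl _ j)). Qed.

Lemma fcat_rshift (T : Type) n1 n2 (G1 : 'I_n1 -> T) (G2 : 'I_n2 -> T) j :
  fcat G1 G2 (rshift n1 j) = G2 j.
Proof. by rewrite /fcat (unsplitK (inr _ j)). Qed.

Lemma finite_subcover_drop (T : Type) (Fam : set (set T)) (E B : set T) n
    (G : 'I_n -> set T) :
    (forall i, Fam (G i) \/ G i = E) -> B `<=` \bigcup_(i in [set: 'I_n]) G i ->
    B `&` E = set0 -> (forall x, B x -> exists V, Fam V) ->
  exists n (G : 'I_n -> set T), (forall i, Fam (G i)) /\ B `<=` \bigcup_(i in [set: 'I_n]) G i.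
Proof.
move=> GFE Bcov BE BFam; have [[x0 Bx0]|B0] := pselect (exists x, B x); last first.
  by exists 0%N, (fun _ => set0); split=> [[] // | x Bx]; exfalso; apply: B0; exists x.
have [V0 FV0] := BFam x0 Bx0.
exists n, (fun i => if pselect (Fam (G i)) then G i else V0); split.
  by move=> i; case: pselect.
move=> x Bx; have [i _ Gix] := Bcov x Bx; exists i => //; case: pselect => // nFG.
case: (GFE i) => // GE; have : (B `&` E) x by split; rewrite -?GE.
by rewrite BE.
Qed.

Section Ideals.
Variable R : idomainType.
Implicit Types (I J P S X : set R) (a b c r x y : R).

Lemma ideal0 I : ideal I -> I 0. Proof. by case. Qed.

Lemma idealD I x y : ideal I -> I x -> I y -> I (x + y).
Proof. by case=> _ [+ _]; apply. Qed.

Lemma idealMl I r x : ideal I -> I x -> I (r * x).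
Proof. by case=> _ [_]; apply. Qed.

Lemma idealMr I r x : ideal I -> I x -> I (x * r).
Proof. by rewrite mulrC; apply: idealMl. Qed.

Lemma ideal_sum I (T : eqType) (s : seq T) (f : T -> R) :
  ideal I -> (forall p, p \in s -> I (f p)) -> I (\sum_(p <- s) f p).
Proof.
move=> iI; elim: s => [|p s IH] sI; first by rewrite big_nil; apply: ideal0.
rewrite big_cons; apply: idealD (sI _ (mem_head _ _)) (IH _) => // q qs.
by apply: sI; rewrite inE qs orbT.
Qed.

Definition ideal_span X : set R :=
  [set x | exists s : seq (R * R), (forall p, p \in s -> X p.2) /\
     x = \sum_(p <- s) p.1 * p.2].

Lemma ideal_span_ideal X : ideal (ideal_span X).
Proof.
split; first by exists [::]; rewrite big_nil.
split.
  move=> x y [s [Xs ->]] [t [Xt ->]]; exists (s ++ t); rewrite big_cat; split => //.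
  by move=> p; rewrite mem_cat => /orP[]; [apply: Xs | apply: Xt].
move=> r x [s [Xs ->]]; exists [seq (r * p.1, p.2) | p <- s]; split.
  by move=> q /mapP[p ps ->]; exact: Xs ps.
by rewrite big_map big_distrr; apply: eq_bigr => p _ /=; rewrite mulrA.
Qed.

Lemma sub_ideal_span X : X `<=` ideal_span X.
Proof.
move=> x Xx; exists [:: (1, x)]; rewrite big_seq1 mul1r; split => //.
by move=> p; rewrite inE => /eqP ->.
Qed.

Lemma ideal_span_min X I : ideal I -> X `<=` I -> ideal_span X `<=` I.
Proof.
move=> iI XI x [s [Xs ->]]; apply: ideal_sum => // p ps.
by apply: idealMl => //; apply/XI/Xs.
Qed.

Definition ideal_adjoin I c : set R := [set x | exists p r, I p /\ x = p + r * c].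

Lemma ideal_adjoin_ideal I c : ideal I -> ideal (ideal_adjoin I c).
Proof.
move=> iI; split; first by exists 0, 0; rewrite mul0r addr0; split => //; apply: ideal0.
split.
  move=> x y [p [r [Ip ->]]] [q [t [Iq ->]]]; exists (p + q), (r + t).
  by split; [apply: idealD | ring].
move=> t x [p [r [Ip ->]]]; exists (t * p), (t * r).
by split; [apply: idealMl | ring].
Qed.

Lemma sub_ideal_adjoin I c : I `<=` ideal_adjoin I c.
Proof. by move=> x Ix; exists x, 0; rewrite mul0r addr0. Qed.

Lemma ideal_adjoin_elt I c : ideal I -> ideal_adjoin I c c.
Proof. by move=> iI; exists 0, 1; rewrite mul1r add0r; split => //; apply: ideal0. Qed.

Definition avoids I S := forall x, I x -> ~ S x.

Definition maximal_avoiding I S P := [/\ ideal P, I `<=` P, avoids P S &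
  forall J, ideal J -> P `<=` J -> avoids J S -> J = P].

Lemma exists_maximal_avoiding I S : ideal I -> avoids I S ->
  exists P, maximal_avoiding I S P.
Proof.
move=> iI IS.
(* set0 is added so that the union of the empty chain stays in the family. *)
pose C J := J = set0 \/ [/\ ideal J, I `<=` J & avoids J S].
have [|P [CP Pmax]] := @Zorn_bigcup R C.
  move=> Fm FC Ftot; have [Fm0|] := pselect (forall J, Fm J -> J = set0).
    by left; apply/seteqP; split => // x [J /Fm0 ->].
  move=> /existsNP[J0 /not_implyP[FJ0 J00]].
  have [/J00//|[_ IJ0 _]] := FC _ FJ0.
  have {}FC J x : Fm J -> J x -> [/\ ideal J, I `<=` J & avoids J S].
    by move=> FJ Jx; case: (FC J FJ) => // JE; rewrite JE in Jx.
  right; split; last 2 first.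
  - by move=> x Ix; exists J0 => //; apply: IJ0.
  - by move=> x [J FJ Jx]; case: (FC J x FJ Jx) => _ _; apply.
  split; first by exists J0 => //; apply: IJ0; apply: ideal0.
  split.
    move=> x y [J1 F1 J1x] [J2 F2 J2y].
    have [iJ1 _ _] := FC _ _ F1 J1x; have [iJ2 _ _] := FC _ _ F2 J2y.
    have [J12|J21] := Ftot _ _ F1 F2.
    + by exists J2 => //; apply: idealD (J12 _ J1x) J2y.
    + by exists J1 => //; apply: idealD J1x (J21 _ J2y).
  move=> r x [J FJ Jx]; have [iJ _ _] := FC _ _ FJ Jx.
  by exists J => //; apply: idealMl.
case: CP => [P0|[iP IP PS]].
  exfalso; apply: (Pmax I); last by right; split.
  by rewrite P0; split => // /(_ 0 (ideal0 iI)).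
exists P; split => // J iJ PJ JS; apply: contrapT => JP.
apply: (Pmax J); last by right; split => // x /IP /PJ.
by split => // JPE; apply: JP; apply/seteqP; split.
Qed.

Lemma maximal_avoiding_prime I S P : S 1 -> (forall a b, S a -> S b -> S (a * b)) ->
  maximal_avoiding I S P -> prime_ideal P.
Proof.
move=> S1 SM [iP _ PS Pmax]; split => //; split; first by move/PS.
have meetS c : ~ P c -> exists x, ideal_adjoin P c x /\ S x.
  move=> Pc; apply: contrapT => /forallNP adjS.
  have adjE : ideal_adjoin P c = P.
    apply: Pmax (ideal_adjoin_ideal c iP) (@sub_ideal_adjoin P c) _ => x Px Sx.
    exact: (adjS x).
  by apply: Pc; rewrite -adjE; apply: ideal_adjoin_elt.
move=> a b Pab; apply: contrapT => /not_orP[Pa Pb].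
have [_ [[p [r [Pp ->]]] Sa]] := meetS a Pa.
have [_ [[q [t [Pq ->]]] Sb]] := meetS b Pb.
apply: (PS _ ^~ (SM _ _ Sa Sb)).
have -> : (p + r * a) * (q + t * b) = p * (q + t * b) + (r * t) * (a * b) + (r * a) * q.
  by ring.
exact: idealD iP (idealD iP (idealMr _ iP Pp) (idealMl _ iP Pab)) (idealMl _ iP Pq).
Qed.

Lemma exists_prime_avoiding I S : ideal I -> S 1 ->
    (forall a b, S a -> S b -> S (a * b)) -> avoids I S ->
  exists P, [/\ prime_ideal P, I `<=` P & avoids P S].
Proof.
move=> iI S1 SM IS; have [P Pmax] := exists_maximal_avoiding iI IS.
by exists P; case: (Pmax) => _ IP PS _; split => //; apply: maximal_avoiding_prime Pmax.
Qed.

Lemma prime_idealX P c n : prime_ideal P -> P (c ^+ n) -> P c.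
Proof.
move=> [_ [P1 Pprime]]; elim: n => [|n IH]; first by rewrite expr0.
by rewrite exprS => /Pprime[].
Qed.

Lemma prime_ideal_prod P m (f : 'I_m -> R) : prime_ideal P ->
  P (\prod_(i < m) f i) -> exists i, P (f i).
Proof.
move=> [_ [P1 Pprime]]; elim: m f => [|m IH] f; first by rewrite big_ord0.
rewrite big_ord_recr => /Pprime[/IH[i Pfi] | Pm]; last by exists ord_max.
by exists (widen_ord (leqnSn m) i).
Qed.

Lemma ideal_prod I m (f : 'I_m -> R) i : ideal I -> I (f i) -> I (\prod_(i < m) f i).
Proof. by move=> iI Ifi; rewrite (bigD1 i) //=; apply: idealMr. Qed.

End Ideals.

Section MaximalIdeals.
Variable R : idomainType.
Implicit Types (N : MaxT R) (I : set R) (a b s y : R).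

Lemma maxT_ideal N : ideal (sval N). Proof. by case: (svalP N). Qed.

Lemma maxT_not1 N : ~ sval N 1. Proof. by case: (svalP N) => _ []. Qed.

Lemma maxT_neq0 N s : ~ sval N s -> s != 0.
Proof. by apply: contra_notN => /eqP ->; apply: ideal0 (maxT_ideal N). Qed.

Lemma maxT_comax N y : ~ sval N y -> exists n r, sval N n /\ n + r * y = 1.
Proof.
case: N => N [iN [_ Nmax]] /= Ny.
case: (Nmax _ (ideal_adjoin_ideal y iN) (@sub_ideal_adjoin _ N y)) => [adjE|].
  by exfalso; apply: Ny; rewrite -adjE; apply: ideal_adjoin_elt.
by move=> [n [r [Nn /esym]]]; exists n, r.
Qed.

Lemma maxT_prime N : prime_ideal (sval N).
Proof.
split; first exact: maxT_ideal; split; first exact: maxT_not1.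
move=> a b Nab; have [Na|Na] := pselect (sval N a); [by left | right].
have [n [r [Nn nra1]]] := maxT_comax Na.
have -> : b = b * n + r * (a * b) by rewrite -[b in LHS]mulr1 -nra1; ring.
exact: idealD (maxT_ideal N) (idealMl _ (maxT_ideal N) Nn) (idealMl _ (maxT_ideal N) Nab).
Qed.

Lemma maxT_notinM N a b : ~ sval N a -> ~ sval N b -> ~ sval N (a * b).
Proof. by move=> Na Nb; case: (maxT_prime N) => _ [_ Nprime] /Nprime[]. Qed.

Lemma exists_maxT_sup I : ideal I -> ~ I 1 -> exists N : MaxT R, I `<=` sval N.
Proof.
move=> iI I1.
have IS : avoids I [set 1] by move=> x Ix x1; apply: I1; rewrite -x1.
have [P [iP IP P1 Pmax]] := exists_maximal_avoiding iI IS.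
have mP : maximal_ideal P.
  split=> //; split; first by move/P1; apply.
  move=> J iJ PJ; have [J1|J1] := pselect (J 1); [by right | left].
  by apply: Pmax => // x Jx x1; apply: J1; rewrite -x1.
by exists (exist _ P mP).
Qed.

End MaximalIdeals.

Section Fraction.
Variable R : idomainType.
Implicit Types (a r : R).

Lemma inF0 : inF (0 : R) = 0. Proof. exact: tofrac0. Qed.
Lemma inF1 : inF (1 : R) = 1. Proof. exact: tofrac1. Qed.
Lemma inFD a r : inF (a + r) = inF a + inF r. Proof. exact: tofracD. Qed.
Lemma inFM a r : inF (a * r) = inF a * inF r. Proof. exact: tofracM. Qed.
Lemma inFX r n : inF (r ^+ n) = inF r ^+ n. Proof. exact: tofracXn. Qed.
Lemma inF_eq0 r : (inF r == 0) = (r == 0). Proof. exact: tofrac_eq0. Qed.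
Lemma inF_inj : injective (@inF R).
Proof. by move=> a r /eqP; rewrite tofrac_eq => /eqP. Qed.

End Fraction.

Section Valuation.
Variable R : idomainType.
Local Notation F := {fraction R}.
Variable v : MaxT R -> F -> int.
Hypothesis hv : almost_dedekind_with v.
Implicit Types (N : MaxT R) (a r s : R) (x y : F).

Lemma vM N x y : x != 0 -> y != 0 -> v N (x * y) = v N x + v N y.
Proof. by case: (hv N) => -[+ _] _; apply. Qed.

Lemma v_addr_ge N x y : x != 0 -> y != 0 -> x + y != 0 ->
  Num.min (v N x) (v N y) <= v N (x + y).
Proof. by case: (hv N) => -[_ [+ _]] _; apply. Qed.

Lemma v_surj N (n : int) : exists x, x != 0 /\ v N x = n.
Proof. by case: (hv N) => -[_ [_]] + _; apply. Qed.

Lemma v1 N : v N 1 = 0.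
Proof.
have := vM N (oner_neq0 F) (oner_neq0 F); rewrite mulr1 => v11.
by apply: (addrI (v N 1)); rewrite addr0 -v11.
Qed.

Lemma vV N x : x != 0 -> v N x^-1 = - v N x.
Proof. by move=> x0; apply/eqP; rewrite -addr_eq0 -vM ?invr_eq0 // mulVf // v1. Qed.

Lemma vX N x n : x != 0 -> v N (x ^+ n) = v N x *+ n.
Proof.
move=> x0; elim: n => [|n IH]; first by rewrite expr0 v1.
by rewrite exprS vM ?expf_neq0 // IH mulrS.
Qed.

Lemma v_ge0_fracP N x : x != 0 ->
  0 <= v N x <-> exists a s, ~ sval N s /\ x = inF a / inF s.
Proof.
move=> x0; case: (hv N) => _ locE.
suff -> : is_true (0 <= v N x) <-> localization N x by [].
by rewrite locE; split => [vx _ | /(_ x0)].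
Qed.

Lemma v_inF_ge0 N r : r != 0 -> 0 <= v N (inF r).
Proof.
move=> r0; apply/v_ge0_fracP; first by rewrite inF_eq0.
by exists r, 1; rewrite inF1 divr1; split => //; apply: maxT_not1.
Qed.

Lemma v_inF_unit N s : ~ sval N s -> v N (inF s) = 0.
Proof.
move=> Ns; have sF : inF s != 0 by rewrite inF_eq0 (maxT_neq0 Ns).
have : 0 <= v N (inF s)^-1.
  by apply/v_ge0_fracP; [rewrite invr_eq0 | exists 1, s; rewrite inF1 div1r].
by rewrite vV // oppr_ge0 => vs_le0; apply/eqP; rewrite eq_le vs_le0 v_inF_ge0 // -inF_eq0.
Qed.

Lemma v_inF_gt0 N r : sval N r -> r != 0 -> 1 <= v N (inF r).
Proof.
move=> Nr r0; have rF : inF r != 0 by rewrite inF_eq0.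
rewrite -gtz0_ge1 lt_def v_inF_ge0 // andbT; apply/eqP => vr0.
have /(v_ge0_fracP _ (invr_neq0 rF)) [a [s [Ns rV]]] : 0 <= v N (inF r)^-1.
  by rewrite vV // vr0 oppr0.
have aF : inF a != 0 by apply: contra_neq (invr_neq0 rF); rewrite rV => ->; rewrite mul0r.
have : inF s = inF a * inF r by rewrite -[inF r]invrK rV invf_div mulrC divfK.
by rewrite -inFM => /inF_inj sE; apply: Ns; rewrite sE; apply: idealMl (maxT_ideal N) Nr.
Qed.

Lemma exists_uniformizer N : exists a, [/\ sval N a, a != 0 & v N (inF a) = 1].
Proof.
have [x [x0 vx]] := v_surj N 1.
have [a [s [Ns xE]]] : exists a s, ~ sval N s /\ x = inF a / inF s.
  by apply/v_ge0_fracP => //; rewrite vx.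
have sF : inF s != 0 by rewrite inF_eq0 (maxT_neq0 Ns).
have va : v N (inF a) = 1 by rewrite -(divfK sF (inF a)) -xE vM // v_inF_unit // vx addr0.
have a0 : a != 0 by apply: contra_neq x0; rewrite xE => ->; rewrite inF0 mul0r.
exists a; split => //; apply: contrapT => Na.
by move: va; rewrite v_inF_unit.
Qed.

Lemma v_sum_ge N (T : eqType) (s : seq T) (f : T -> F) (k : int) :
  (forall p, p \in s -> f p = 0 \/ k <= v N (f p)) ->
  \sum_(p <- s) f p = 0 \/ k <= v N (\sum_(p <- s) f p).
Proof.
rewrite big_seq_cond => sk.
apply: (big_ind (fun x => x = 0 \/ k <= v N x)); [by left | | by move=> p /andP[/sk]].
move=> x y [->|vx] [->|vy]; rewrite ?add0r ?addr0; [by left|by right|by right|].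
have [->|x0] := eqVneq x 0; first by rewrite add0r; right.
have [->|y0] := eqVneq y 0; first by rewrite addr0; right.
have [xy0|xy0] := eqVneq (x + y) 0; [by left | right].
by apply: le_trans (v_addr_ge N x0 y0 xy0); rewrite le_min vx vy.
Qed.

End Valuation.

Section ZariskiBasicOpens.
Variable R : idomainType.
Implicit Types (S X : set R) (P : set R) (t : R).

Definition basic_open S : set (set R) := [set P | prime_ideal P /\ ~ (S `<=` P)].

Lemma basic_open_zariski_open S : zariski_open (basic_open S). Proof. by exists S. Qed.

Lemma basic_open1P P t : basic_open [set t] P <-> prime_ideal P /\ ~ P t.
Proof.
split=> -[pP Pt]; split => //; first by move=> Pt'; apply: Pt => x ->.
by move=> tP; apply/Pt/tP.
Qed.

Lemma basic_open_notin S P : basic_open S P -> exists2 s, S s & ~ P s.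
Proof.
move=> [_ SP]; apply: contrapT => /forall2NP nSP; apply: SP => s Ss.
by case: (nSP s) => // /contrapT.
Qed.

Lemma basic_open1_cover_pow t (Fam : set (set (set R))) :
    (forall V, Fam V -> zariski_open V) -> basic_open [set t] `<=` \bigcup_(V in Fam) V ->
  exists n, ideal_span [set x | exists2 V, Fam V & basic_open [set x] `<=` V] (t ^+ n).
Proof.
move=> Fopen tcov; apply: contrapT => /forallNP tX.
pose X := [set x | exists2 V, Fam V & basic_open [set x] `<=` V].
pose S y := exists n, y = t ^+ n.
have S1 : S 1 by exists 0%N; rewrite expr0.
have SM a b : S a -> S b -> S (a * b) by move=> [m ->] [k ->]; exists (m + k)%N; rewrite exprD.
have XS : avoids (ideal_span X) S by move=> x Xx [m xE]; apply: (tX m); rewrite -xE.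
have [P [pP XP PS]] := exists_prime_avoiding (ideal_span_ideal X) S1 SM XS.
have [|V FV VP] := tcov P.
  by apply/basic_open1P; split => // /PS; apply; exists 1%N; rewrite expr1.
have [S' VE] := Fopen V FV.
have [s S's Ps] : exists2 s, S' s & ~ P s by apply: basic_open_notin; rewrite /basic_open -VE.
apply/Ps/XP/sub_ideal_span; exists V => // Q /basic_open1P[pQ Qs].
by rewrite VE; split => // S'Q; apply/Qs/S'Q.
Qed.

Lemma zariski_compact_basic_open1 t : zariski_compact (basic_open [set t]).
Proof.
move=> Fam Fopen tcov; have [n [s [Xs tE]]] := basic_open1_cover_pow Fopen tcov.
have sF (i : 'I_(size s)) :
    exists V, Fam V /\ basic_open [set (nth (0, 0) s i).2] `<=` V.
  by have [V FV sV] := Xs _ (mem_nth (0, 0) (ltn_ord i)); exists V.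
have [G GP] := choice sF.
exists (size s), G; split=> [i | P /basic_open1P[pP Pt]]; first by case: (GP i).
have [p ps Pp] : exists2 p, p \in s & ~ P p.2.
  apply: contrapT => /forall2NP sP; apply/Pt/(prime_idealX (n := n)) => //.
  rewrite tE; apply: ideal_sum => [|p ps]; first by case: pP.
  by apply: idealMl; [case: pP | case: (sP p) => // /contrapT].
have ps' : (index p s < size s)%N by rewrite index_mem.
exists (Ordinal ps') => //; apply: (GP _).2.
by apply/basic_open1P; rewrite /= nth_index.
Qed.

End ZariskiBasicOpens.

Section MaxTopology.
Variable R : idomainType.
Local Notation MT := (MaxT R).
Implicit Types (W A B : set MT) (N : MT) (t y : R) (T : seq R).

Lemma Max_open_ext W1 W2 : Max_open W1 -> W1 = W2 -> Max_open W2.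
Proof. by move=> + <-. Qed.

Lemma Max_open_bigcup (I : Type) (D : set I) (W : I -> set MT) :
  (forall i, D i -> Max_open (W i)) -> Max_open (\bigcup_(i in D) W i).
Proof.
move=> Wopen.
pose O := [set P | exists2 i, D i & exists O', [/\ inverse_open O',
   forall N : MT, W i N <-> O' (sval N) & O' P]].
exists O; split.
  split=> [P [i _ [O' [[O'pr _] _ O'P]]] | P [i Di [O' [[O'pr O'b] WO' O'P]]]].
    exact: O'pr.
  have [n [U [Uco [UP UQ]]]] := O'b P O'P.
  exists n, U; split => //; split => // Q pQ QU.
  by exists i => //; exists O'; split => //; apply: UQ.
move=> N; split=> [[i Di WN] | [i Di [O' [_ WO' O'N]]]]; last by exists i => //; apply/WO'.
have [O' [O'open WO']] := Wopen i Di.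
by exists i => //; exists O'; split => //; apply/WO'.
Qed.

Lemma Max_openU W1 W2 : Max_open W1 -> Max_open W2 -> Max_open (W1 `|` W2).
Proof.
move=> W1open W2open; apply: (@Max_open_ext (\bigcup_(b in [set: bool]) if b then W1 else W2)).
  by apply: Max_open_bigcup => -[].
by apply/seteqP; split=> [N [[] _ WN] | N [WN | WN]]; [left | right | exists true | exists false].
Qed.

Lemma Max_openI W1 W2 : Max_open W1 -> Max_open W2 -> Max_open (W1 `&` W2).
Proof.
move=> [O1 [[O1pr O1b] W1O]] [O2 [[O2pr O2b] W2O]].
exists (O1 `&` O2); split; last first.
  by move=> N; split=> -[h1 h2]; split; [exact/W1O | exact/W2O | exact/W1O | exact/W2O].
split=> [P [/O1pr] // | P [O1P O2P]].
have [n1 [U1 [U1co [U1P U1Q]]]] := O1b P O1P.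
have [n2 [U2 [U2co [U2P U2Q]]]] := O2b P O2P.
exists (n1 + n2)%N, (fcat U1 U2); split.
  exact: (fcatP (P := fun U => zariski_open U /\ zariski_compact U)).
split; first exact: (fcatP (P := fun U => ~ U P)).
move=> Q pQ QU; split.
  by apply: U1Q => // j; have := QU (lshift n2 j); rewrite fcat_lshift.
by apply: U2Q => // j; have := QU (rshift n1 j); rewrite fcat_rshift.
Qed.

Definition Vmax T : set MT := [set N | forall t, t \in T -> sval N t].
Definition Dmax y : set MT := [set N | ~ sval N y].

Lemma Max_open_Vmax T : Max_open (Vmax T).
Proof.
exists [set P | prime_ideal P /\ forall t, t \in T -> P t]; split; last first.
  by move=> N; split=> [NT | [_ //]]; split => //; apply: maxT_prime.
split=> [P [] // | P [pP PT]].
exists (size T), (fun i => basic_open [set nth 0 T i]); split.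
  by move=> i; split; [apply: basic_open_zariski_open | apply: zariski_compact_basic_open1].
split=> [i /basic_open1P[_] | Q pQ QT]; first by apply; apply/PT/mem_nth.
split=> // t tT; have tT' : (index t T < size T)%N by rewrite index_mem.
have := QT (Ordinal tT'); rewrite /= nth_index // => Qt.
by apply: contrapT => nQt; apply/Qt/basic_open1P.
Qed.

Lemma Max_open_Dmax y : Max_open (Dmax y).
Proof.
exists [set Q | prime_ideal Q /\ exists n r, Q n /\ n + r * y = 1]; split; last first.
  move=> N; split=> [Ny | [_ [n [r [Nn nry1]]]] Ny].
    by split; [apply: maxT_prime | apply: maxT_comax].
  apply: (@maxT_not1 _ N); rewrite -nry1.
  exact: idealD (maxT_ideal N) Nn (idealMl _ (maxT_ideal N) Ny).
split=> [P [] // | P [pP [n [r [Pn nry1]]]]].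
exists 1%N, (fun _ => basic_open [set n]); split.
  by move=> i; split; [apply: basic_open_zariski_open | apply: zariski_compact_basic_open1].
split=> [i /basic_open1P[_] // | Q pQ Qn]; split => //; exists n, r; split => //.
by apply: contrapT => nQn; apply: (Qn ord0); apply/basic_open1P.
Qed.

Lemma Max_openT : Max_open (@setT MT).
Proof. by apply: (Max_open_ext (Max_open_Vmax [::])); apply/seteqP; split. Qed.

Lemma Max_open0 : Max_open (@set0 MT).
Proof.
apply: (Max_open_ext (@Max_open_bigcup _ set0 (fun _ : unit => set0) _)) => //.
by rewrite bigcup_set0.
Qed.

Lemma Max_open_cst (P : Prop) : Max_open [set _ : MT | P].
Proof.
have [p|np] := pselect P.
  by apply: (Max_open_ext Max_openT); apply/seteqP; split.
by apply: (Max_open_ext Max_open0); apply/seteqP; split.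
Qed.

Lemma setC_Vmax1 t : ~` Vmax [:: t] = Dmax t.
Proof.
apply/seteqP; split=> N /= => [Nt' Nt | Nt Nt']; first by apply: Nt' => s; rewrite inE => /eqP ->.
by apply/Nt/Nt'; rewrite inE.
Qed.

Lemma setC_Dmax y : ~` Dmax y = Vmax [:: y].
Proof. by rewrite -setC_Vmax1 setCK. Qed.

Definition Max_clopen W := Max_open W /\ Max_open (~` W).

Lemma Max_clopenI_Vmax1_Dmax t y : Max_clopen (Vmax [:: t] `&` Dmax y).
Proof.
split; first by apply: Max_openI; [apply: Max_open_Vmax | apply: Max_open_Dmax].
rewrite setCI setC_Vmax1 setC_Dmax.
by apply: Max_openU; [apply: Max_open_Dmax | apply: Max_open_Vmax].
Qed.

Lemma Max_compact_closed A B : Max_compact A -> B `<=` A -> Max_open (~` B) -> Max_compact B.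
Proof.
move=> Acpt BA Bc_open Fam Fopen Bcov.
pose Fam' := [set W | Fam W \/ W = ~` B].
have [|N AN|n [G [GF' Acov]]] := Acpt Fam'.
- by move=> W [/Fopen // | ->].
- have [BN|BN] := pselect (B N); last by exists (~` B) => //; right.
  by have [W FW WN] := Bcov N BN; exists W => //; left.
apply: (finite_subcover_drop GF' (subset_trans BA Acov)); first by rewrite setICr.
by move=> x /Bcov[W FW _]; exists W.
Qed.

Lemma Max_compact0 : Max_compact (@set0 MT).
Proof. by move=> Fam _ _; exists 0%N, (fun _ => set0); split => // -[]. Qed.

Lemma Max_compactU A B : Max_compact A -> Max_compact B -> Max_compact (A `|` B).
Proof.
move=> Acpt Bcpt Fam Fopen ABcov.
have [n1 [G1 [G1F Acov]]] := Acpt Fam Fopen (fun N AN => ABcov N (or_introl AN)).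
have [n2 [G2 [G2F Bcov]]] := Bcpt Fam Fopen (fun N BN => ABcov N (or_intror BN)).
exists (n1 + n2)%N, (fcat G1 G2); split; first exact: (fcatP (P := Fam)).
move=> N [/Acov[j _ G1N] | /Bcov[j _ G2N]].
  by exists (lshift n2 j); rewrite ?fcat_lshift.
by exists (rshift n1 j); rewrite ?fcat_rshift.
Qed.

End MaxTopology.

Section LocalBasis.
Variable R : idomainType.
Local Notation F := {fraction R}.
Local Notation MT := (MaxT R).
Variable v : MT -> F -> int.
Hypothesis hv : almost_dedekind_with v.
Implicit Types (N Q : MT) (O : set MT) (T : seq R) (j s y : R).

Lemma Vmax_local_elt T j N s : j \in T -> j != 0 -> Vmax T N -> sval N s ->
  exists y, ~ sval N y /\ forall Q, Vmax T Q -> ~ sval Q y -> sval Q s.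
Proof.
move=> jT j0 NT Ns; have [->|s0] := eqVneq s 0.
  by exists 1; split=> [|Q _ _]; [apply: maxT_not1 | apply: ideal0 (maxT_ideal Q)].
have [jF sF] : inF j != 0 /\ inF s != 0 by rewrite !inF_eq0.
pose K := `|v N (inF j)|%N.
have KE : K%:Z = v N (inF j) by rewrite abszE ger0_norm // v_inF_ge0.
have xF : inF s ^+ K / inF j != 0 by rewrite mulf_neq0 ?expf_neq0 ?invr_neq0.
have [a [s' [Ns' xE]]] : exists a s', ~ sval N s' /\ inF s ^+ K / inF j = inF a / inF s'.
  apply/(v_ge0_fracP hv) => //; rewrite vM ?expf_neq0 ?invr_neq0 // vV // vX // subr_ge0 -KE.
  by rewrite -mulr_natr natz -[leLHS]mul1r ler_wpM2r // (v_inF_gt0 hv).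
have s's : s ^+ K * s' = a * j.
  apply: inF_inj; rewrite !inFM inFX; apply/eqP.
  by rewrite -eqr_div ?inF_eq0 ?(maxT_neq0 Ns') // xE.
exists s'; split => // Q QT Qs'; apply: (prime_idealX (n := K) (maxT_prime Q)).
have : sval Q (s ^+ K * s') by rewrite s's; exact: idealMl (maxT_ideal Q) (QT _ jT).
by case: (maxT_prime Q) => _ [_ Qprime] /Qprime[].
Qed.

Lemma Dmax_nbhd_big N m (B : 'I_m -> MT -> Prop) :
    (forall k, exists y, ~ sval N y /\ forall Q, ~ sval Q y -> B k Q) ->
  exists y, ~ sval N y /\ forall Q, ~ sval Q y -> forall k, B k Q.
Proof.
move=> By; have [f fB] := choice By; exists (\prod_(k < m) f k); split.
  by move=> /(prime_ideal_prod (maxT_prime N))[k]; case: (fB k).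
move=> Q Qf k; apply: (fB k).2 => Qfk; apply: Qf; exact: ideal_prod (maxT_ideal Q) Qfk.
Qed.

Lemma Vmax_Dmax_nbhd_sub T j N O : j \in T -> j != 0 -> Max_open O -> O N -> Vmax T N ->
  exists y, ~ sval N y /\ forall Q, Vmax T Q -> ~ sval Q y -> O Q.
Proof.
move=> jT j0 [O' [[_ O'b] OO']] ON NT.
have [n [U [Uco [UN UO']]]] := O'b _ ((OO' N).1 ON).
have Uy i : exists y, ~ sval N y /\ forall Q, ~ sval Q y -> Vmax T Q -> ~ U i (sval Q).
  have [[S UE] Ucpt] := Uco i.
  have SN : S `<=` sval N.
    move=> x Sx; apply: contrapT => Nx; apply: (UN i); rewrite UE.
    by split=> [|/(_ x Sx)//]; apply: maxT_prime.
  pose Fam := [set V | exists s, S s /\ V = basic_open [set s]].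
  have [|P|m [G [GF Ucov]]] := Ucpt Fam.
  - by move=> V [s [_ ->]]; apply: basic_open_zariski_open.
  - rewrite UE => PU; have [s Ss Ps] := basic_open_notin PU.
    by exists (basic_open [set s]); [exists s | apply/basic_open1P; case: PU].
  have [sk skG] := choice GF.
  have skN k : exists y, ~ sval N y /\ forall Q, ~ sval Q y -> Vmax T Q -> sval Q (sk k).
    have [y [Ny yQ]] := Vmax_local_elt jT j0 NT (SN _ (skG k).1).
    by exists y; split => // Q Qy QT; apply: yQ.
  have [y [Ny yQ]] := Dmax_nbhd_big skN.
  exists y; split => // Q Qy QT /Ucov[k _].
  by rewrite (skG k).2 => /basic_open1P[_]; apply; apply: yQ.
have [y [Ny yQ]] := Dmax_nbhd_big Uy.
exists y; split => // Q QT Qy; apply/OO'/UO'; first exact: maxT_prime.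
by move=> i; apply: yQ.
Qed.

Lemma Max_compact_Vmax T j : j \in T -> j != 0 -> Max_compact (Vmax T).
Proof.
move=> jT j0 Fam Fopen Tcov.
pose Y y := exists W, Fam W /\ forall Q, Vmax T Q -> ~ sval Q y -> W Q.
(* A maximal ideal containing T and all of Y would be a point of V(T) outside every
   neighbourhood V(T) ∩ D(y) provided by Vmax_Dmax_nbhd_sub. *)
have [s [sTY s1]] : ideal_span ([set x | x \in T] `|` Y) 1.
  apply: contrapT => span1.
  have [N spanN] := exists_maxT_sup (ideal_span_ideal _) span1.
  have NT : Vmax T N by move=> t tT; apply/spanN/sub_ideal_span; left.
  have [W FW WN] := Tcov N NT.
  have [y [Ny yW]] := Vmax_Dmax_nbhd_sub jT j0 (Fopen W FW) WN NT.
  by apply/Ny/spanN/sub_ideal_span; right; exists W.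
have sW (i : 'I_(size s)) : exists W, (Fam W \/ W = set0) /\
    (Y (nth (0, 0) s i).2 -> forall Q, Vmax T Q -> ~ sval Q (nth (0, 0) s i).2 -> W Q).
  have [[W [FW WQ]] | nY] := pselect (Y (nth (0, 0) s i).2); first by exists W; split; [left|].
  by exists set0; split=> [|/nY]; [right|].
have [G GW] := choice sW.
apply: (@finite_subcover_drop _ _ set0 _ (size s) G); first by move=> i; case: (GW i).
- move=> N NT; have [p ps Np] : exists2 p, p \in s & ~ sval N p.2.
    apply: contrapT => /forall2NP sN; apply: (@maxT_not1 _ N); rewrite s1.
    apply: ideal_sum (maxT_ideal N) _ => p ps; apply: idealMl (maxT_ideal N) _.
    by case: (sN p) => // /contrapT.
  have ps' : (index p s < size s)%N by rewrite index_mem.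
  exists (Ordinal ps') => //; apply: (GW _).2; rewrite /= ?nth_index //.
  by case: (sTY p ps) => // pT; exfalso; apply/Np/NT.
- by rewrite setI0.
- by move=> N /Tcov[W FW _]; exists W.
Qed.

Lemma exists_clopen_compact_nbhd N O : Max_open O -> O N ->
  exists W, [/\ Max_clopen W, Max_compact W, W N & W `<=` O].
Proof.
move=> Oopen ON; have [j [Nj j0 _]] := exists_uniformizer hv N.
have jT : j \in [:: j] by rewrite inE.
have NT : Vmax [:: j] N by move=> t; rewrite inE => /eqP ->.
have [y [Ny yO]] := Vmax_Dmax_nbhd_sub jT j0 Oopen ON NT.
have [Wopen Wc_open] := Max_clopenI_Vmax1_Dmax j y.
exists (Vmax [:: j] `&` Dmax y); split => //; last by move=> Q [QT Qy]; apply: yO.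
by apply: Max_compact_closed (Max_compact_Vmax jT j0) _ Wc_open; apply: subIsetl.
Qed.

End LocalBasis.

Section IdealProduct.
Variable R : idomainType.
Local Notation F := {fraction R}.
Implicit Types (I J : set F) (x y : F).

Lemma ideal_mul_seq I J (s : seq (F * F)) :
  (forall p, p \in s -> I p.1 /\ J p.2) -> ideal_mul I J (\sum_(p <- s) p.1 * p.2).
Proof.
move=> sIJ; exists (size s), (fun i => (nth (0, 0) s i).1), (fun i => (nth (0, 0) s i).2).
by split=> [i | ]; [apply/sIJ/mem_nth | rewrite (big_nth (0, 0)) big_mkord].
Qed.

Lemma ideal_mulP I J x : ideal_mul I J x <->
  exists s : seq (F * F), (forall p, p \in s -> I p.1 /\ J p.2) /\ x = \sum_(p <- s) p.1 * p.2.
Proof.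
split=> [[n [a [b [abIJ ->]]]] | [s [sIJ ->]]]; last exact: ideal_mul_seq.
exists [seq (a i, b i) | i <- enum 'I_n]; split; last by rewrite big_map big_enum.
by move=> _ /mapP[i _ ->]; apply: abIJ.
Qed.

Lemma ideal_mul0 I J : ideal_mul I J 0.
Proof. by have := @ideal_mul_seq I J [::]; rewrite big_nil; apply. Qed.

Lemma ideal_mul_mul I J x y : I x -> J y -> ideal_mul I J (x * y).
Proof.
move=> Ix Jy; have := @ideal_mul_seq I J [:: (x, y)]; rewrite big_seq1; apply.
by move=> p; rewrite inE => /eqP ->.
Qed.

Lemma ideal_mulD I J x y : ideal_mul I J x -> ideal_mul I J y -> ideal_mul I J (x + y).
Proof.
move=> /ideal_mulP[s [sIJ ->]] /ideal_mulP[t [tIJ ->]]; rewrite -big_cat.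
by apply: ideal_mul_seq => p; rewrite mem_cat => /orP[/sIJ | /tIJ].
Qed.

Lemma ideal_mul_sum I J (T : eqType) (s : seq T) (f : T -> F) :
  (forall p, p \in s -> ideal_mul I J (f p)) -> ideal_mul I J (\sum_(p <- s) f p).
Proof.
elim: s => [|p s IH] sIJ; first by rewrite big_nil; apply: ideal_mul0.
rewrite big_cons; apply: ideal_mulD (sIJ _ (mem_head _ _)) (IH _) => q qs.
by apply: sIJ; rewrite inE qs orbT.
Qed.

Lemma ideal_mulZ I J (r : R) x : Rsubmodule J -> ideal_mul I J x -> ideal_mul I J (inF r * x).
Proof.
move=> [_ [_ JZ]] /ideal_mulP[s [sIJ ->]]; rewrite big_distrr; apply: ideal_mul_sum => p ps.
by have [Ip Jp] := sIJ p ps; rewrite /= mulrCA; apply/ideal_mul_mul/JZ.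
Qed.

Lemma ideal_mulC I J : ideal_mul I J = ideal_mul J I.
Proof.
suff sub I' J' : ideal_mul I' J' `<=` ideal_mul J' I' by apply/seteqP; split; apply: sub.
move=> x /ideal_mulP[s [sIJ ->]]; apply: ideal_mul_sum => p ps.
by have [Ip Jp] := sIJ p ps; rewrite mulrC; apply: ideal_mul_mul.
Qed.

Lemma inF_sum_closed (T : eqType) (s : seq T) (f : T -> F) :
  (forall p, p \in s -> exists r, f p = inF r) -> exists r, \sum_(p <- s) f p = inF r.
Proof.
elim: s => [|p s IH] sR; first by exists 0; rewrite big_nil inF0.
have [r1 r1E] := sR p (mem_head _ _).
have [|r2 r2E] := IH; first by move=> q qs; apply: sR; rewrite inE qs orbT.
by exists (r1 + r2); rewrite big_cons r1E r2E inFD.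
Qed.

Lemma fractional_ideal_mul I J : fractional_ideal I -> fractional_ideal J ->
  fractional_ideal (ideal_mul I J).
Proof.
move=> [_ [[x [Ix x0]] [d [d0 dI]]]] [Jsub [[y [Jy y0]] [e [e0 eJ]]]].
split.
  by split; [apply: ideal_mul0 | split=> [? ?|? ?]; [apply: ideal_mulD | apply: ideal_mulZ]].
split; first by exists (x * y); rewrite mulf_neq0 //; split => //; apply: ideal_mul_mul.
exists (d * e); rewrite mulf_neq0 //; split => // _ /ideal_mulP[s [sIJ ->]].
rewrite big_distrr; apply: inF_sum_closed => p ps; have [Ip Jp] := sIJ p ps.
have [r1 r1E] := dI _ Ip; have [r2 r2E] := eJ _ Jp.
by exists (r1 * r2); rewrite /= inFM mulrACA r1E r2E inFM.
Qed.

End IdealProduct.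

Section InvertibleNu.
Variable R : idomainType.
Local Notation F := {fraction R}.
Local Notation MT := (MaxT R).
Variable v : MT -> F -> int.
Hypothesis hv : almost_dedekind_with v.
Implicit Types (I J : set F) (N : MT) (h : MT -> int) (n : int).

Definition inv_nu h := exists I, invertible_ideal I /\ forall N, is_nu v I N (h N).

Lemma is_nu_attained I N n : is_nu v I N n -> exists a, [/\ I a, a != 0 & v N a = n].
Proof.
move=> [nuI nuImax]; apply: contrapT => /forallNP nI.
suff : n + 1 <= n by rewrite gerDl.
apply: nuImax => a Ia a0; rewrite lezD1 lt_def nuI // andbT.
by apply/eqP => vaE; apply: (nI a); split.
Qed.

Lemma inv_nu0 : inv_nu (fun _ => 0).
Proof.
pose R1 : set F := [set x | exists r, x = inF r].
have R1frac : fractional_ideal R1.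
  split.
    split; first by exists 0; rewrite inF0.
    split=> [_ _ [a ->] [b ->] | r _ [a ->]]; first by exists (a + b); rewrite inFD.
    by exists (r * a); rewrite inFM.
  split; first by exists 1; split; [exists 1; rewrite inF1 | apply: oner_neq0].
  by exists 1; split=> [|_ [a ->]]; [apply: oner_neq0 | exists a; rewrite inF1 mul1r].
exists R1; split.
  split => //; exists R1; split => //; apply/seteqP; split=> [x /ideal_mulP[s [sR ->]] | _ [a ->]].
    apply: inF_sum_closed => p /sR[[a ->] [b ->]].
    by exists (a * b); rewrite inFM.
  by rewrite -[inF a]mulr1; apply: ideal_mul_mul; [exists a | exists 1; rewrite inF1].
move=> N; split=> [_ [a ->] | m /(_ 1)]; first by rewrite inF_eq0; apply: v_inF_ge0.
by rewrite (v1 hv); apply; [exists 1; rewrite inF1 | apply: oner_neq0].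
Qed.

Lemma invertible_ideal_mul I1 I2 : invertible_ideal I1 -> invertible_ideal I2 ->
  invertible_ideal (ideal_mul I1 I2).
Proof.
move=> [I1frac [J1 [J1frac I1J1]]] [I2frac [J2 [J2frac I2J2]]].
split; first exact: fractional_ideal_mul.
exists (ideal_mul J1 J2); split; first exact: fractional_ideal_mul.
have IJR x1 x2 y1 y2 : I1 x1 -> I2 x2 -> J1 y1 -> J2 y2 ->
    exists r, x1 * x2 * (y1 * y2) = inF r.
  move=> I1x1 I2x2 J1y1 J2y2; rewrite mulrACA.
  have : ideal_mul I1 J1 (x1 * y1) by apply: ideal_mul_mul.
  have : ideal_mul I2 J2 (x2 * y2) by apply: ideal_mul_mul.
  by rewrite I1J1 I2J2 => -[r2 ->] [r1 ->]; exists (r1 * r2); rewrite inFM.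
apply/seteqP; split=> [_ /ideal_mulP[s [sIJ ->]] | _ [r ->]].
  apply: inF_sum_closed => p /sIJ[/ideal_mulP[t1 [t1I ->]] /ideal_mulP[t2 [t2J ->]]].
  rewrite big_distrl; apply: inF_sum_closed => q /t1I[I1q I2q].
  rewrite big_distrr; apply: inF_sum_closed => w /t2J[J1w J2w].
  exact: IJR.
rewrite -[inF r]mulr1; apply: ideal_mulZ; first by case: (fractional_ideal_mul J1frac J2frac).
have : ideal_mul I1 J1 1 by rewrite I1J1; exists 1; rewrite inF1.
have : ideal_mul I2 J2 1 by rewrite I2J2; exists 1; rewrite inF1.
move=> /ideal_mulP[t2 [t2IJ t2E]] /ideal_mulP[t1 [t1IJ t1E]].
rewrite -[1]mulr1 {1}t1E t2E big_distrl; apply: ideal_mul_sum => q /t1IJ[I1q J1q].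
rewrite big_distrr; apply: ideal_mul_sum => w /t2IJ[I2w J2w].
by rewrite /= mulrACA; apply: ideal_mul_mul; apply: ideal_mul_mul.
Qed.

Lemma is_nu_mul I1 I2 N n1 n2 : is_nu v I1 N n1 -> is_nu v I2 N n2 ->
  is_nu v (ideal_mul I1 I2) N (n1 + n2).
Proof.
move=> nu1 nu2; have [a1 [I1a1 a10 va1]] := is_nu_attained nu1.
have [a2 [I2a2 a20 va2]] := is_nu_attained nu2.
split=> [x /ideal_mulP[s [sI ->]] x0 | m nuIm]; last first.
  by rewrite -va1 -va2 -(vM hv) //; apply: nuIm; [apply: ideal_mul_mul | rewrite mulf_neq0].
have sv p : p \in s -> p.1 * p.2 = 0 \/ n1 + n2 <= v N (p.1 * p.2).
  move=> /sI[I1p I2p]; have [->|p10] := eqVneq p.1 0; first by left; rewrite mul0r.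
  have [->|p20] := eqVneq p.2 0; first by left; rewrite mulr0.
  by right; rewrite (vM hv) //; apply: lerD; [apply: nu1.1 | apply: nu2.1].
by have [s0|//] := v_sum_ge hv sv; rewrite s0 eqxx in x0.
Qed.

Lemma inv_nuD h1 h2 : inv_nu h1 -> inv_nu h2 -> inv_nu (fun N => h1 N + h2 N).
Proof.
move=> [I1 [I1inv nu1]] [I2 [I2inv nu2]]; exists (ideal_mul I1 I2).
by split=> [|N]; [apply: invertible_ideal_mul | apply: is_nu_mul].
Qed.

Lemma inv_nuN h : inv_nu h -> inv_nu (fun N => - h N).
Proof.
move=> [I [[Ifrac [J [Jfrac IJ]]] nuI]]; exists J; split.
  by split => //; exists I; split => //; rewrite ideal_mulC.
move=> N; have [a [Ia a0 va]] := is_nu_attained (nuI N).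
split=> [x Jx x0 | m nuJm].
  have : ideal_mul I J (a * x) by apply: ideal_mul_mul.
  rewrite IJ => -[r axE]; have r0 : r != 0 by rewrite -inF_eq0 -axE mulf_neq0.
  by have := v_inF_ge0 hv N r0; rewrite -axE (vM hv) // va -lerBlDl sub0r.
rewrite leNgt; apply/negP => hm.
have : ideal_mul I J 1 by rewrite IJ; exists 1; rewrite inF1.
move=> /ideal_mulP[s [sIJ s1]].
have sv p : p \in s -> p.1 * p.2 = 0 \/ 1 <= v N (p.1 * p.2).
  move=> /sIJ[Ip Jp]; have [->|p10] := eqVneq p.1 0; first by left; rewrite mul0r.
  have [->|p20] := eqVneq p.2 0; first by left; rewrite mulr0.
  right; rewrite (vM hv) // -gtz0_ge1 -(subrr (h N)).
  exact: ler_ltD ((nuI N).1 _ Ip p10) (lt_le_trans hm (nuJm _ Jp p20)).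
have [/eqP|] := v_sum_ge hv sv; rewrite -s1 ?(v1 hv); first by rewrite oner_eq0.
by rewrite ler10.
Qed.

Lemma inv_nuZ (c : int) h : inv_nu h -> inv_nu (fun N => c * h N).
Proof.
move=> hnu; have nat_nu (n : nat) : inv_nu (fun N => n%:Z * h N).
  elim: n => [|n IH]; first by under eq_fun do rewrite mul0r; apply: inv_nu0.
  by under eq_fun do rewrite -addn1 PoszD mulrDl mul1r; apply: inv_nuD.
case: c => n; first exact: nat_nu.
by under eq_fun do rewrite NegzE mulNr; apply: inv_nuN.
Qed.

End InvertibleNu.

Section InverseIdeal.
Variable R : idomainType.
Local Notation F := {fraction R}.
Implicit Types (I : set F).

Definition ideal_inverse I : set F := [set x | forall y, I y -> exists r, x * y = inF r].

Lemma ideal_mul_inverse_sub I : ideal_mul I (ideal_inverse I) `<=` [set x | exists r, x = inF r].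
Proof.
move=> _ /ideal_mulP[s [sIJ ->]]; apply: inF_sum_closed => p /sIJ[Ip Jp].
by rewrite mulrC; apply: Jp.
Qed.

Lemma fractional_ideal_inverse I : fractional_ideal I -> fractional_ideal (ideal_inverse I).
Proof.
move=> [[_ [_ IZ]] [[x [Ix x0]] [d [d0 dI]]]].
have [r rE] := dI _ Ix; have Ir : I (inF r) by rewrite -rE; apply: IZ.
have r0 : r != 0 by rewrite -inF_eq0 -rE mulf_neq0 ?inF_eq0.
split.
  split; first by move=> y _; exists 0; rewrite mul0r inF0.
  split=> [y1 y2 y1J y2J z Iz | r' y yJ z Iz].
    have [[r1 r1E] [r2 r2E]] := (y1J z Iz, y2J z Iz).
    by exists (r1 + r2); rewrite mulrDl r1E r2E inFD.
  by have [r1 r1E] := yJ z Iz; exists (r' * r1); rewrite -mulrA r1E inFM.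
split; first by exists (inF d); rewrite inF_eq0; split => // y /dI.
by exists r; split => // y /(_ _ Ir); rewrite mulrC.
Qed.

End InverseIdeal.

Section IsolatedPoints.
Variable R : idomainType.
Local Notation F := {fraction R}.
Local Notation MT := (MaxT R).
Variable v : MT -> F -> int.
Hypothesis hv : almost_dedekind_with v.
Implicit Types (L : seq R) (N Q : MT) (a l t : R).

Definition ideal_gen L : set F :=
  [set x | exists r, ideal_span [set l | l \in L] r /\ x = inF r].

Lemma fractional_ideal_gen L a : a \in L -> a != 0 -> fractional_ideal (ideal_gen L).
Proof.
move=> aL a0; have spanI := ideal_span_ideal [set l | l \in L].
split.
  split; first by exists 0; split; [apply: ideal0 | rewrite inF0].
  split=> [_ _ [r1 [r1L ->]] [r2 [r2L ->]] | r _ [r1 [r1L ->]]].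
    by exists (r1 + r2); rewrite inFD; split => //; apply: idealD.
  by exists (r * r1); rewrite inFM; split => //; apply: idealMl.
split.
  by exists (inF a); rewrite inF_eq0; split => //; exists a; split => //; apply: sub_ideal_span.
by exists 1; split=> [|_ [r [_ ->]]]; [apply: oner_neq0 | exists r; rewrite inF1 mul1r].
Qed.

Definition v_min_at N L t :=
  [/\ t \in L, t != 0 & forall l, l \in L -> l != 0 -> v N (inF t) <= v N (inF l)].

Lemma v_min_common_denom N L t : v_min_at N L t ->
  exists2 s, ~ sval N s & forall l, l \in L -> exists al, l * s = al * t.
Proof.
move=> [_ t0 tmin]; have tF : inF t != 0 by rewrite inF_eq0.
have lden l : l \in L -> exists al s, ~ sval N s /\ l * s = al * t.
  move=> lL; have [->|l0] := eqVneq l 0.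
    by exists 0, 1; rewrite !mul0r; split => //; apply: maxT_not1.
  have lF : inF l != 0 by rewrite inF_eq0.
  have [|al [s [Ns ltE]]] := (v_ge0_fracP hv N (mulf_neq0 lF (invr_neq0 tF))).1.
    by rewrite (vM hv) ?invr_neq0 // (vV hv) // subr_ge0; apply: tmin.
  exists al, s; split => //; apply: inF_inj; rewrite !inFM; apply/eqP.
  by rewrite -eqr_div ?inF_eq0 ?(maxT_neq0 Ns) // ltE.
clear tmin; elim: L lden => [|l L IH] lden; first by exists 1 => //; apply: maxT_not1.
have [al [s1 [Ns1 ls1]]] := lden l (mem_head _ _).
have [|s2 Ns2 Ls2] := IH; first by move=> l' l'L; apply: lden; rewrite inE l'L orbT.
exists (s1 * s2); first exact: maxT_notinM.
move=> l'; rewrite inE => /orP[/eqP -> | /Ls2[al' l's2]].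
  by exists (al * s2); rewrite mulrA ls1 mulrAC.
by exists (al' * s1); rewrite mulrCA l's2 mulrCA mulrA.
Qed.

Lemma invertible_ideal_gen L a : a \in L -> a != 0 ->
  (forall N, exists t, v_min_at N L t) -> invertible_ideal (ideal_gen L).
Proof.
move=> aL a0 Lmin; have Ifrac := fractional_ideal_gen aL a0.
have [Jsub _] := fractional_ideal_inverse Ifrac.
split => //; exists (ideal_inverse (ideal_gen L)).
split; first exact: fractional_ideal_inverse.
apply/seteqP; split; first exact: ideal_mul_inverse_sub.
pose P r := ideal_mul (ideal_gen L) (ideal_inverse (ideal_gen L)) (inF r).
suff P1 : P 1 by move=> _ [r ->]; rewrite -[inF r]mulr1 -inF1; apply: ideal_mulZ.
have Pideal : ideal P.
  split; first by rewrite /P inF0; apply: ideal_mul0.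
  by split=> [x y Px Py | r x Px]; rewrite /P ?inFD ?inFM; [apply: ideal_mulD | apply: ideal_mulZ].
apply: contrapT => P1; have [N PN] := exists_maxT_sup Pideal P1.
have [t tmin] := Lmin N; have [tL t0 _] := tmin.
have [s Ns Ls] := v_min_common_denom tmin.
have tF : inF t != 0 by rewrite inF_eq0.
have stJ : ideal_inverse (ideal_gen L) (inF s / inF t).
  move=> _ [r [rL ->]].
  have [b bE] : [set r | exists b, s * r = b * t] r.
    apply: ideal_span_min rL => [|l /Ls[al lE]]; last by exists al; rewrite mulrC.
    split; first by exists 0; rewrite mulr0 mul0r.
    split=> [x y [b1 b1E] [b2 b2E] | r' x [b bE]].
      by exists (b1 + b2); rewrite mulrDr b1E b2E mulrDl.
    by exists (r' * b); rewrite mulrCA bE mulrA.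
  by exists b; rewrite mulrAC -inFM bE inFM mulfK.
apply/Ns/PN; rewrite /P -(divfK tF (inF s)) mulrC.
by apply: ideal_mul_mul stJ; exists t; split => //; apply: sub_ideal_span.
Qed.

End IsolatedPoints.

Section IsolatedSupport.
Variable R : idomainType.
Local Notation F := {fraction R}.
Local Notation MT := (MaxT R).
Variable v : MT -> F -> int.
Hypothesis hv : almost_dedekind_with v.
Implicit Types (N Q : MT) (h : MT -> int).

Definition indic_pt (M : MT) : MT -> int := fun N => if `[< N = M >] then 1 else 0.

Lemma inv_nu_indic_pt M : isolated M -> inv_nu v (indic_pt M).
Proof.
move=> Mopen; have [a [Ma a0 va]] := exists_uniformizer hv M.
have aT : a \in [:: a] by rewrite inE.
have Ma' : Vmax [:: a] M by move=> t; rewrite inE => /eqP ->.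
have [y [My yM]] := Vmax_Dmax_nbhd_sub hv aT a0 Mopen erefl Ma'.
have [n [r [Mn nry1]]] := maxT_comax My.
pose L := [:: a; n].
have LM l : l \in L -> sval M l by rewrite !inE => /orP[] /eqP ->.
have LQ Q : Q <> M -> exists2 t, t \in L & ~ sval Q t.
  move=> QM; apply: contrapT => /forall2NP LQ.
  have {}LQ t : t \in L -> sval Q t by move=> tL; case: (LQ t) => // /contrapT.
  apply/QM/yM => [t | Qy]; first by rewrite inE => /eqP ->; apply/LQ/mem_head.
  apply: (@maxT_not1 _ Q); rewrite -nry1.
  by apply: idealD (maxT_ideal Q) (LQ _ _) (idealMl _ (maxT_ideal Q) Qy); rewrite !inE eqxx ?orbT.
have spanM : ideal_span [set l | l \in L] `<=` sval M by apply: ideal_span_min (maxT_ideal M) LM.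
have aL : a \in L by rewrite inE eqxx.
have aspan : ideal_span [set l | l \in L] a by apply: sub_ideal_span.
exists (ideal_gen L); split.
  apply: (invertible_ideal_gen hv aL a0) => N; have [->|NM] := pselect (N = M).
    by exists a; split => // l lL l0; rewrite va; apply: (v_inF_gt0 hv) (LM l lL) l0.
  have [t tL Nt] := LQ N NM; exists t; split => //; first exact: maxT_neq0 Nt.
  by move=> l lL l0; rewrite (v_inF_unit hv Nt) v_inF_ge0.
move=> N; rewrite /indic_pt; have [->|NM] := pselect (N = M).
  rewrite asboolT //; split=> [_ [q [qL ->]] | m].
    by rewrite inF_eq0; apply/(v_inF_gt0 hv)/spanM.
  by rewrite -va; apply; [exists a | rewrite inF_eq0].
rewrite asboolF //; split=> [_ [q [qL ->]] | m]; first by rewrite inF_eq0; apply: v_inF_ge0.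
have [t tL Nt] := LQ N NM; rewrite -(v_inF_unit hv Nt); apply.
  by exists t; split => //; apply: sub_ideal_span.
by rewrite inF_eq0 (maxT_neq0 Nt).
Qed.

Lemma inv_nu_isolated_support n (pts : 'I_n -> MT) h : (forall i, isolated (pts i)) ->
  (forall N, h N != 0 -> exists i, N = pts i) -> inv_nu v h.
Proof.
elim: n pts h => [|n IH] pts h ptsI hpts.
  suff -> : h = fun _ => 0 by apply: inv_nu0.
  by apply/funext => N; apply/eqP; apply: contraT => /hpts[[]].
pose M := pts ord_max; pose h' N := if `[< N = M >] then 0 else h N.
have h'nu : inv_nu v h'.
  apply: (IH (fun i => pts (widen_ord (leqnSn n) i))) => [i | N]; first exact: ptsI.
  rewrite /h'; have [-> | NM] := pselect (N = M); first by rewrite asboolT // eqxx.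
  rewrite asboolF // => /hpts[i Ni]; have ilt : (i < n)%N.
    rewrite ltn_neqAle -ltnS ltn_ord andbT; apply: contra_notN NM => /eqP iE.
    by rewrite Ni; congr pts; apply: val_inj.
  by exists (Ordinal ilt); rewrite Ni; congr pts; apply: val_inj.
have := inv_nuD hv h'nu (inv_nuZ hv (h M) (inv_nu_indic_pt (ptsI ord_max))).
congr inv_nu; apply/funext => N; rewrite /h' /indic_pt.
have [->|NM] := pselect (N = M); first by rewrite asboolT // add0r mulr1.
by rewrite asboolF // mulr0 addr0.
Qed.

End IsolatedSupport.

Section CompactSupport.
Variable R : idomainType.
Local Notation MT := (MaxT R).
Implicit Types (f : MT -> int) (K W : set MT).

Lemma Max_open_setC_support f : Max_open (f @^-1` [set 0]) -> Max_open (~` [set N | f N != 0]).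
Proof.
move=> f0; apply: Max_open_ext f0 _; apply/seteqP; split=> N /=; first by move=> ->.
by move/negP; rewrite negbK => /eqP.
Qed.

Lemma Max_compact_ext (A K : set MT) : Max_compact A -> A = K -> Max_compact K.
Proof. by move=> + <-. Qed.

Lemma Cc_MaxD f1 f2 : Cc_Max f1 -> Cc_Max f2 -> Cc_Max (fun N => f1 N + f2 N).
Proof.
move=> [f1open f1cpt] [f2open f2cpt].
have f12open A : Max_open ((fun N => f1 N + f2 N) @^-1` A).
  pose W (p : int * int) := f1 @^-1` [set p.1] `&` f2 @^-1` [set p.2].
  apply: (Max_open_ext (@Max_open_bigcup R _ [set p | A (p.1 + p.2)] W _)).
    by move=> p _; apply: Max_openI.
  apply/seteqP; split=> [N [p Ap [/= -> ->]] // | N AN]; by exists (f1 N, f2 N).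
split => //; apply: Max_compact_closed (Max_compactU f1cpt f2cpt) _ _.
  by move=> N /=; have [->|] := eqVneq (f1 N) 0; [rewrite add0r; right | left].
exact: Max_open_setC_support.
Qed.

Lemma Cc_MaxN f : Cc_Max f -> Cc_Max (fun N => - f N).
Proof.
move=> [fopen fcpt]; split=> [A | ]; first exact: fopen [set z | A (- z)].
by apply: Max_compact_ext fcpt _; apply/seteqP; split=> N /=; rewrite oppr_eq0.
Qed.

Lemma Max_open_isolated : Max_open [set N : MT | isolated N].
Proof.
have := @Max_open_bigcup R _ (@isolated R) (fun N => [set N]) (fun _ => id).
by move/Max_open_ext; apply; apply/seteqP; split=> [N [M Mi ->] | N Ni] //; exists N.
Qed.

Lemma Bd_compact_restrict K : Max_compact K -> Bd_compact [set x : BdT R | K (sval x)].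
Proof.
move=> Kcpt Fam Fopen Kcov.
pose Iso := [set N : MT | isolated N].
pose Fam' := [set O | (Max_open O /\ exists2 W, Fam W & forall x, W x <-> O (sval x)) \/ O = Iso].
have [|N KN|n [G [GF' Gcov]]] := Kcpt Fam'.
- by move=> O [[] // | ->]; apply: Max_open_isolated.
- have [Ni|Ni] := pselect (isolated N); first by exists Iso => //; right.
  have [W FW WN] := Kcov (exist _ N Ni) KN; have [O [Oopen WO]] := Fopen W FW.
  by exists O; [left; split => //; exists W | exact: (WO (exist _ N Ni)).1].
pose Gx i := [set x : BdT R | G i (sval x)].
apply: (@finite_subcover_drop _ Fam [set x | isolated (sval x)] _ n Gx).
- move=> i; rewrite /Gx; case: (GF' i) => [[_ [W FW WG]] | ->]; last by right.
  by left; have <- : W = [set x | G i (sval x)] by apply/seteqP; split => x /WG.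
- by move=> x /Gcov[i _ Gix]; exists i.
- by apply/seteqP; split=> // -[N Ni] [].
- by move=> x /Kcov[W FW _]; exists W.
Qed.

Lemma Cc_Bd_restrict f : Cc_Max f -> Cc_Bd (fun x : BdT R => f (sval x)).
Proof.
move=> [fopen fcpt]; split; last exact: Bd_compact_restrict fcpt.
by move=> A; exists (f @^-1` A).
Qed.

End CompactSupport.

Section Extension.
Variable R : idomainType.
Local Notation MT := (MaxT R).
Implicit Types (s : seq (set MT * int)) (N : MT).

Fixpoint step_fun s N : int :=
  if s is (W, c) :: s' then if `[< W N >] then c else step_fun s' N else 0.

Lemma Max_open_step_fun s (Z : set int) : (forall p, p \in s -> Max_clopen p.1) ->
  Max_open (step_fun s @^-1` Z).
Proof.
elim: s => [|[W c] s IH] sW /=; first exact: Max_open_cst.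
have [Wopen Wc_open] := sW _ (mem_head _ _).
have := Max_openU (Max_openI Wopen (Max_open_cst R (Z c)))
  (Max_openI Wc_open (IH (fun p ps => sW p (predU1r _ _ ps)))).
move/Max_open_ext; apply; apply/seteqP; split=> N /=; have [WN|WN] := pselect (W N).
- by rewrite asboolT //; case=> [[]|[]].
- by rewrite asboolF //; case=> [[]|[]].
- by rewrite asboolT // => Zc; left.
- by rewrite asboolF // => Zs; right.
Qed.

Lemma step_fun_support s N : step_fun s N != 0 -> exists2 p, p \in s & p.1 N.
Proof.
elim: s => [|[W c] s IH] /=; first by [].
case: (pselect (W N)) => [WN _ | WN]; first by exists (W, c); rewrite ?mem_head.
by rewrite asboolF // => /IH[p ps pN]; exists p; rewrite // inE ps orbT.
Qed.

Lemma step_funE s N (z : int) : (forall p, p \in s -> p.1 N -> p.2 = z) ->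
  z = 0 \/ (exists2 p, p \in s & p.1 N) -> step_fun s N = z.
Proof.
elim: s => [|[W c] s IH] sz /=; first by case=> [-> | [p]].
have [WN|WN] := pselect (W N).
  by rewrite asboolT // => _; exact: (sz (W, c) (mem_head _ _) WN).
rewrite asboolF // => zs; apply: IH => [p ps | ]; first by apply: sz; rewrite inE ps orbT.
case: zs => [|[p]]; first by left.
by rewrite inE => /orP[/eqP -> /WN // | ps pN]; right; exists p.
Qed.

Lemma Max_compact_bigcup_seq s : (forall p, p \in s -> Max_compact p.1) ->
  Max_compact [set N | exists2 p, p \in s & p.1 N].
Proof.
elim: s => [|p s IH] sK.
  by apply: Max_compact_ext (@Max_compact0 R) _; apply/seteqP; split=> // N [].
have := Max_compactU (sK p (mem_head _ _)) (IH (fun q qs => sK q (predU1r _ _ qs))).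
move/Max_compact_ext; apply; apply/seteqP; split=> N.
  by case=> [pN | [q qs qN]]; [exists p; rewrite ?mem_head | exists q; rewrite // inE qs orbT].
by case=> q; rewrite inE => /orP[/eqP -> | qs qN]; [left | right; exists q].
Qed.

Lemma Cc_Max_step_fun s : (forall p, p \in s -> Max_clopen p.1 /\ Max_compact p.1) ->
  Cc_Max (step_fun s).
Proof.
move=> sW; have sclopen p ps := (sW p ps).1.
split=> [Z | ]; first exact: Max_open_step_fun.
apply: Max_compact_closed (Max_compact_bigcup_seq (fun p ps => (sW p ps).2)) _ _.
  by move=> N /step_fun_support.
by apply: Max_open_setC_support; apply: Max_open_step_fun.
Qed.

Variable v : MT -> {fraction R} -> int.
Hypothesis hv : almost_dedekind_with v.

Lemma Cc_Bd_extend (g : BdT R -> int) : Cc_Bd g ->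
  exists2 f, Cc_Max f & forall x, f (sval x) = g x.
Proof.
move=> [gopen gcpt].
have Wx (x : BdT R) : exists W, [/\ Max_clopen W, Max_compact W, W (sval x) &
    forall y : BdT R, W (sval y) -> g y = g x].
  have [O [Oopen gO]] := gopen [set g x].
  have [W [Wclopen Wcpt Wx WO]] := exists_clopen_compact_nbhd hv Oopen ((gO x).1 erefl).
  by exists W; split => // y /WO /(gO y).2.
have [W WP] := choice Wx.
pose Fam := [set V | exists x, V = [set y : BdT R | W x (sval y)]].
have [|x _|n [G [GF gcov]]] := gcpt Fam.
- by move=> _ [x ->]; exists (W x); have [[]] := WP x.
- by exists [set y : BdT R | W x (sval y)]; [exists x | have [] := WP x].
have [xs xsG] := choice GF.
pose s := [seq (W (xs i), g (xs i)) | i <- enum 'I_n].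
exists (step_fun s); first by apply: Cc_Max_step_fun => _ /mapP[i _ ->]; have [] := WP (xs i).
move=> y; apply: step_funE => [_ /mapP[i _ ->] /= Wy | ].
  by have [_ _ _ gW] := WP (xs i); rewrite (gW _ Wy).
have [gy0|gy0] := eqVneq (g y) 0; [by left | right].
have [i _ Giy] := gcov y gy0; exists (W (xs i), g (xs i)); last by move: Giy; rewrite xsG.
by apply: map_f; rewrite mem_enum.
Qed.

Lemma Cc_BdP (g : BdT R -> int) :
  Cc_Bd g <-> exists2 f, Cc_Max f & forall x, f (sval x) = g x.
Proof.
split=> [|[f fCc fg]]; first exact: Cc_Bd_extend.
have -> : g = fun x => f (sval x) by apply/funext => x; rewrite fg.
exact: Cc_Bd_restrict.
Qed.

Lemma Gcap_vanishing_on_Bd (h : MT -> int) : Cc_Max h ->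
  (forall x : BdT R, h (sval x) = 0) -> Gcap v h.
Proof.
move=> hCc hBd; split => //; have [_ hcpt] := hCc.
have [|N hN|n [G [GF hcov]]] := hcpt [set W | exists N, isolated N /\ W = [set N]].
- by move=> _ [N [Ni ->]].
- have [Ni|Ni] := pselect (isolated N); first by exists [set N] => //; exists N.
  by have /= hN0 := hBd (exist _ N Ni); rewrite /= hN0 in hN.
have [pts ptsG] := choice GF.
apply: (inv_nu_isolated_support hv (pts := pts)) => [i | N /hcov[i _]]; first by case: (ptsG i).
by rewrite (ptsG i).2 => ->; exists i.
Qed.

End Extension.

Theorem proposition4p8 (R : idomainType) (v : MaxT R -> {fraction R} -> int)
  (hv : almost_dedekind_with v) :
  exists phi : (BdT R -> int) -> (MaxT R -> int),
    (forall g, Cc_Bd g -> Cc_Max (phi g)) /\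
    (forall g1 g2, Cc_Bd g1 -> Cc_Bd g2 ->
       Gcap v (fun M => phi (fun x => g1 x + g2 x) M - phi g1 M - phi g2 M)) /\
    (forall f, Cc_Max f -> exists g, Cc_Bd g /\ Gcap v (fun M => f M - phi g M)).
Proof.
have lift (g : BdT R -> int) :
    exists f : MaxT R -> int, Cc_Bd g -> Cc_Max f /\ forall x, f (sval x) = g x.
  have [gCc|gCc] := pselect (Cc_Bd g); last by exists (fun _ => 0).
  by have [f fCc fg] := Cc_Bd_extend hv gCc; exists f.
have [phi phiP] := choice lift.
exists phi; split=> [g /phiP[] // | ]; split=> [g1 g2 g1Cc g2Cc | f fCc].
  have [[phi1Cc phi1E] [phi2Cc phi2E]] := (phiP g1 g1Cc, phiP g2 g2Cc).
  have g12Cc : Cc_Bd (fun x => g1 x + g2 x).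
    apply: (Cc_BdP hv _).2; exists (fun N => phi g1 N + phi g2 N); first exact: Cc_MaxD.
    by move=> x; rewrite phi1E phi2E.
  have [phi12Cc phi12E] := phiP _ g12Cc.
  apply: (Gcap_vanishing_on_Bd hv) => [|x]; last by rewrite phi12E phi1E phi2E; ring.
  by apply: Cc_MaxD (Cc_MaxD phi12Cc (Cc_MaxN phi1Cc)) (Cc_MaxN phi2Cc).
have fBd := Cc_Bd_restrict fCc; exists (fun x => f (sval x)); split => //.
have [phiCc phiE] := phiP _ fBd.
by apply: (Gcap_vanishing_on_Bd hv (Cc_MaxD fCc (Cc_MaxN phiCc))) => x; rewrite phiE subrr.
Qed.
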